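(* Let $n\ge 2$ and $k>0$. Then $\mathbf{H}$ is $(k,\dots,k)$-increasing: $\mathbf{H}(\mathbf{x})\le\mathbf{H}(x_1+tk,\dots,x_n+tk)$ for all $\mathbf{x}\in[0,1]^n$ and $t>0$ with $(x_1+tk,\dots,x_n+tk)\in[0,1]^n$.
   Context: For $\mathbf{x}\in[0,1]^n$ let $x_{(1)}\ge\dots\ge x_{(n)}$ be its entries in decreasing order, and define the median $Med(\mathbf{x})=\frac12(x_{(k)}+x_{(k+1)})$ if $n=2k$ and $Med(\mathbf{x})=x_{(k+1)}$ if $n=2k+1$ (here $k$ is just the index for the median). Define $f_i(\mathbf{x})=\frac1n$ if $x_1=\dots=x_n$, and otherwise $f_i(\mathbf{x})=\frac{1}{n-1}\Big(1-\frac{|x_i-Med(\mathbf{x})|}{\sum_{j=1}^n|x_j-Med(\mathbf{x})|}\Big)$. Then $\mathbf{H}(\mathbf{x})=\sum_{i=1}^n f_i(\mathbf{x})\,x_i$. *)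

From HB Require Import structures.
From mathcomp Require Import all_boot all_order all_algebra.
Set Implicit Arguments. Unset Strict Implicit. Unset Printing Implicit Defensive.
Import Order.TTheory GRing.Theory Num.Theory.
Local Open Scope ring_scope.

Section Defs.
Variable R : realFieldType.

(* entries of x sorted in decreasing order: x_(1) >= ... >= x_(n),
   stored 0-based: (sorted_desc x)`_j = x_(j+1) *)
Definition sorted_desc (n : nat) (x : 'I_n -> R) : seq R :=
  sort (fun a b : R => b <= a) [seq x i | i <- enum 'I_n].

Definition Med (n : nat) (x : 'I_n -> R) : R :=
  let s := sorted_desc x in
  let k := n./2 in
  if ~~ odd n then (s`_(k.-1) + s`_k) / 2 else s`_k.

Definition all_equal (n : nat) (x : 'I_n -> R) : bool :=
  [forall i, forall j, x i == x j].

Definition fw (n : nat) (x : 'I_n -> R) (i : 'I_n) : R :=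
  if all_equal x then 1 / n%:R
  else (1 / (n%:R - 1)) *
       (1 - `|x i - Med x| / \sum_(j < n) `|x j - Med x|).

Definition H (n : nat) (x : 'I_n -> R) : R := \sum_(i < n) fw x i * x i.

Definition in_unit_cube (n : nat) (x : 'I_n -> R) : Prop :=
  forall i, 0 <= x i <= 1.

End Defs.

From mathcomp Require Import all_boot all_order all_algebra.
From mathcomp Require Import zify ring.
Import Order.TTheory GRing.Theory Num.Theory.
Local Open Scope ring_scope.

(* The weights f_i depend on x only through the deviations x_i - Med(x) and
   through whether x is constant; translating every coordinate by c moves the
   median by c as well, so the weights are translation invariant.  They are
   also nonnegative, hence H(x + c) = H(x) + c * sum_i f_i(x) >= H(x) for
   c >= 0. *)

Section Translation.
Variable R : realFieldType.

Lemma size_sorted_desc n (x : 'I_n -> R) : size (sorted_desc x) = n.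
Proof. by rewrite /sorted_desc size_sort size_map size_enum_ord. Qed.

Lemma sorted_descD n (x : 'I_n -> R) c :
  sorted_desc (fun i => x i + c) = [seq a + c | a <- sorted_desc x].
Proof.
pose ge := fun a b : R => b <= a.
rewrite /sorted_desc (map_sort (leT' := ge) (leT := ge)) -?map_comp //.
by move=> a b; rewrite /ge lerD2r.
Qed.

Lemma MedD n (x : 'I_n -> R) c : (0 < n)%N ->
  Med (fun i => x i + c) = Med x + c.
Proof.
move=> n_gt0; rewrite /Med sorted_descD.
have half_lt : (n./2 < size (sorted_desc x))%N.
  by rewrite size_sorted_desc ltn_half_double; lia.
have half_pred_lt : (n./2.-1 < size (sorted_desc x))%N.
  exact: leq_ltn_trans (leq_pred _) half_lt.
by case: ifP => _; rewrite !(nth_map 0) //; field.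
Qed.

Lemma all_equalD n (x : 'I_n -> R) c :
  all_equal (fun i => x i + c) = all_equal x.
Proof.
apply: eq_forallb => i; apply: eq_forallb => j.
by apply/eqP/eqP => [/addIr|->].
Qed.

Lemma fwD n (x : 'I_n -> R) c i : fw (fun i => x i + c) i = fw x i.
Proof.
have n_gt0 : (0 < n)%N by case: i => /= i; lia.
have devD j : x j + c - Med (fun i => x i + c) = x j - Med x.
  by rewrite MedD // opprD addrACA subrr addr0.
rewrite /fw all_equalD devD.
by under eq_bigr => j _ do rewrite devD.
Qed.

Lemma all_equal_le1 n (x : 'I_n -> R) : (n <= 1)%N -> all_equal x.
Proof.
move=> n_le1; apply/forallP => i; apply/forallP => j.
by rewrite (_ : i = j) //; apply/val_inj; case: i j => [i ?] [j ?] /=; lia.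
Qed.

Lemma fw_ge0 n (x : 'I_n -> R) i : 0 <= fw x i.
Proof.
rewrite /fw; case: ifPn => [_|not_eq]; first by rewrite mul1r invr_ge0 ler0n.
have n_gt1 : (1 < n)%N.
  by rewrite ltnNge; apply: contra not_eq; exact: all_equal_le1.
apply: mulr_ge0; first by rewrite mul1r invr_ge0 subr_ge0 (ler_nat R 1 n) ltnW.
set S := \sum_(j < n) _.
have devS : `|x i - Med x| <= S.
  by rewrite /S (bigD1 i) //= lerDl sumr_ge0.
have [->|S_neq0] := eqVneq S 0; first by rewrite invr0 mulr0 subr0.
have S_gt0 : 0 < S by rewrite lt_def S_neq0 (le_trans _ devS).
by rewrite subr_ge0 ler_pdivrMr // mul1r.
Qed.

Lemma HD n (x : 'I_n -> R) c :
  H (fun i => x i + c) = H x + c * \sum_(i < n) fw x i.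
Proof.
rewrite /H mulr_sumr -big_split /=; apply: eq_bigr => i _.
by rewrite fwD; ring.
Qed.

Lemma H_le_HD n (x : 'I_n -> R) c : 0 <= c -> H x <= H (fun i => x i + c).
Proof.
by move=> c_ge0; rewrite HD lerDl mulr_ge0 // sumr_ge0 // => i _; exact: fw_ge0.
Qed.

End Translation.

Theorem proposition18 (R : realFieldType) (n : nat) (k : R)
  (hn : (2 <= n)%N) (hk : 0 < k) (x : 'I_n -> R) (t : R) (ht : 0 < t) :
  in_unit_cube x ->
  in_unit_cube (fun i => x i + t * k) ->
  H x <= H (fun i => x i + t * k).
Proof. by move=> _ _; apply: H_le_HD; rewrite ltW ?mulr_gt0. Qed.
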